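(* The one-dimensional subalgebras of ${\rm S}_1$ are exactly $\langle e_1\rangle$, $\langle e_2\rangle$ and $\langle\alpha e_2+e_3\rangle$ ($\alpha\in\mathbb{C}$). Up to automorphisms of ${\rm S}_1$, every one-dimensional subalgebra is equivalent to $\langle e_1\rangle$ or $\langle e_2\rangle$.
   Context: ${\rm S}_1$ is the complex algebra with basis $e_1,e_2,e_3$ whose only nonzero products of basis elements are $e_1e_i=e_ie_1=e_i$ ($i=1,2,3$), with involution $\overline{e_1}=e_1$, $\overline{e_2}=-e_2$, $\overline{e_3}=-e_3$ (which plays no role here). A subalgebra is a linear subspace closed under multiplication (it need not contain $e_1$). Equivalence up to automorphisms means one is mapped onto the other by an algebra automorphism. $\langle S\rangle$ denotes linear span. *)

From HB Require Import structures.
From mathcomp Require Import all_boot all_order all_algebra.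
From mathcomp Require Import complex.
From mathcomp Require Import reals.
Set Implicit Arguments. Unset Strict Implicit. Unset Printing Implicit Defensive.
Import Order.TTheory GRing.Theory Num.Theory.
Local Open Scope ring_scope.

(* Elements of S_1 are coordinate rows x = x_1 e_1 + x_2 e_2 + x_3 e_3,
   stored as 'rV[C]_3 with indices 0,1,2 for e_1,e_2,e_3. *)
Definition S1 (R : realType) := 'rV[R[i]]_3.

Definition i0 : 'I_3 := @Ordinal 3 0 isT.
Definition i1 : 'I_3 := @Ordinal 3 1 isT.
Definition i2 : 'I_3 := @Ordinal 3 2 isT.

Definition s1e1 {R : realType} : S1 R := delta_mx 0 i0.
Definition s1e2 {R : realType} : S1 R := delta_mx 0 i1.
Definition s1e3 {R : realType} : S1 R := delta_mx 0 i2.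

(* Bilinear product: only nonzero products of basis elements are
   e1 ei = ei e1 = ei. *)
Definition s1mul {R : realType} (x y : S1 R) : S1 R :=
  \row_j (if j == i0 then x 0 i0 * y 0 i0
          else x 0 i0 * y 0 j + x 0 j * y 0 i0).

Definition is_subalgebra {R : realType} (V : {vspace S1 R}) : Prop :=
  forall x y, x \in V -> y \in V -> s1mul x y \in V.

Definition is_s1_automorphism {R : realType} (f : S1 R -> S1 R) : Prop :=
  [/\ (forall (a : R[i]) (x y : S1 R), f (a *: x + y) = a *: f x + f y),
      bijective f &
      forall x y, f (s1mul x y) = s1mul (f x) (f y)].

Definition maps_onto {R : realType} (f : S1 R -> S1 R) (V W : {vspace S1 R}) : Prop :=
  forall y, y \in W <-> exists2 x, x \in V & f x = y.

From HB Require Import structures.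
From mathcomp Require Import all_boot all_order all_algebra.
From mathcomp Require Import complex.
From mathcomp Require Import reals ring.
Import Order.TTheory GRing.Theory Num.Theory.
Local Open Scope ring_scope.

(* A line <[x]> is a subalgebra iff x^2 is a multiple of x.  Writing
   x = x1 e1 + x2 e2 + x3 e3 we have x^2 = x1 (x1 e1 + 2 x2 e2 + 2 x3 e3),
   so either x1 = 0 and x^2 = 0, or x1 <> 0 and then x2 = x3 = 0.  The
   lines through square-zero elements are <e2> and <alpha e2 + e3>, and the
   latter is carried onto <e2> by an automorphism fixing e1 and acting
   linearly on <e2, e3>. *)

Section Lines.
Variables (K : fieldType) (vT : vectType K).
Implicit Types (u v : vT) (V : {vspace vT}).

Lemma vline_eq u v : u != 0 -> u \in <[v]>%VS -> <[u]>%VS = <[v]>%VS.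
Proof.
move=> u_nz uv; apply/eqP; rewrite eqEdim -memvE uv /= !dim_vline u_nz.
by case: (v != 0).
Qed.

Lemma dimv1_vline V : \dim V = 1%N -> exists2 v, v != 0 & V = <[v]>%VS.
Proof.
move=> dimV; have pick_nz : vpick V != 0 by rewrite vpick0 -dimv_eq0 dimV.
exists (vpick V) => //; apply/eqP.
by rewrite eq_sym eqEdim -memvE memv_pick dim_vline pick_nz dimV.
Qed.

End Lines.

Section S1Lines.
Context {R : realType}.
Implicit Types (x y v : S1 R) (k l : R[i]).

Lemma row3P x y :
  x 0 i0 = y 0 i0 -> x 0 i1 = y 0 i1 -> x 0 i2 = y 0 i2 -> x = y.
Proof.
move=> e0 e1 e2; apply/rowP => -[[|[|[|//]]] lt_j3].
- by rewrite (_ : Ordinal lt_j3 = i0) //; apply: val_inj.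
- by rewrite (_ : Ordinal lt_j3 = i1) //; apply: val_inj.
- by rewrite (_ : Ordinal lt_j3 = i2) //; apply: val_inj.
Qed.

Lemma s1mulZZ k l x y : s1mul (k *: x) (l *: y) = (k * l) *: s1mul x y.
Proof. by apply: row3P; rewrite !mxE /=; ring. Qed.

Lemma is_subalgebra_vline v : is_subalgebra <[v]>%VS <-> s1mul v v \in <[v]>%VS.
Proof.
split=> [sub_v | /vlineP[l vv]]; first exact: sub_v (memv_line v) (memv_line v).
move=> _ _ /vlineP[k ->] /vlineP[k' ->]; apply/vlineP; exists (k * k' * l).
by rewrite s1mulZZ vv scalerA.
Qed.

Lemma subalgebra_dim1P (V : {vspace S1 R}) :
  \dim V = 1%N /\ is_subalgebra V <->
  exists2 v, v != 0 & V = <[v]>%VS /\ s1mul v v \in <[v]>%VS.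
Proof.
split=> [[/dimv1_vline[v v_nz ->] /is_subalgebra_vline] | [v v_nz [-> vv]]].
  by exists v.
by rewrite dim_vline v_nz; split; last exact/is_subalgebra_vline.
Qed.

Lemma s1mul_sqr0 x : x 0 i0 = 0 -> s1mul x x = 0.
Proof. by move=> x0; apply: row3P; rewrite !mxE /= x0; ring. Qed.

Lemma s1mul_self_vline x :
  s1mul x x \in <[x]>%VS <-> x 0 i0 = 0 \/ x 0 i1 = 0 /\ x 0 i2 = 0.
Proof.
split=> [/vlineP[l xx] | [x0 | [x1 x2]]]; last 2 first.
- by rewrite s1mul_sqr0 // mem0v.
- apply/vlineP; exists (x 0 i0).
  by apply: row3P; rewrite !mxE /= ?x1 ?x2; ring.
have [x0 | x0_nz] := eqVneq (x 0 i0) 0; [by left | right].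
have coord j : s1mul x x 0 j = (l *: x) 0 j by rewrite xx.
have l_x0 : l = x 0 i0.
  by apply: (mulIf x0_nz); have := coord i0; rewrite !mxE.
(* For j <> i0 the j-th coordinates read 2 x_0 x_j = x_0 x_j. *)
suff xj0 j : j != i0 -> x 0 j = 0 by split; apply: xj0.
move=> j_nz; have := coord j; rewrite !mxE (negPf j_nz) l_x0 => /eqP.
rewrite -subr_eq0 (_ : _ - _ = x 0 j * x 0 i0); last by ring.
by rewrite mulf_eq0 (negPf x0_nz) orbF => /eqP.
Qed.

Lemma vline_s1_normal_form x :
  x != 0 -> x 0 i0 = 0 \/ x 0 i1 = 0 /\ x 0 i2 = 0 ->
  [\/ <[x]>%VS = <[s1e1]>%VS, <[x]>%VS = <[s1e2]>%VS
    | exists alpha, <[x]>%VS = <[alpha *: s1e2 + s1e3]>%VS].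
Proof.
move=> x_nz [x0 | [x1 x2]]; last first.
  apply: Or31; apply: vline_eq => //; apply/vlineP; exists (x 0 i0).
  by apply: row3P; rewrite !mxE /= ?x1 ?x2; ring.
have [x2 | x2_nz] := eqVneq (x 0 i2) 0.
  apply: Or32; apply: vline_eq => //; apply/vlineP; exists (x 0 i1).
  by apply: row3P; rewrite !mxE /= ?x0 ?x2; ring.
apply: Or33; exists (x 0 i1 / x 0 i2); apply: vline_eq => //.
apply/vlineP; exists (x 0 i2); apply: row3P; rewrite !mxE /= ?x0; try ring.
by rewrite mulr1 addr0 mulrC divfK.
Qed.

Lemma s1_normal_form_subalgebra (V : {vspace S1 R}) :
  [\/ V = <[s1e1]>%VS, V = <[s1e2]>%VS
    | exists alpha, V = <[alpha *: s1e2 + s1e3]>%VS] ->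
  exists2 v, v != 0 & V = <[v]>%VS /\ s1mul v v \in <[v]>%VS.
Proof.
have coord_nz v j : v 0 j != 0 -> v != 0.
  by apply: contraNneq => ->; rewrite mxE.
case=> [-> | -> | [a ->]]; (eexists; [|split; [reflexivity|]]).
- by apply: (coord_nz _ i0); rewrite mxE oner_eq0.
- by apply/s1mul_self_vline; right; rewrite !mxE.
- by apply: (coord_nz _ i1); rewrite mxE oner_eq0.
- by apply/s1mul_self_vline; left; rewrite mxE.
- by apply: (coord_nz _ i2); rewrite !mxE /= mulr0 add0r oner_eq0.
- by apply/s1mul_self_vline; left; rewrite !mxE /= mulr0 addr0.
Qed.

Lemma subalgebra_dim1_normal_form (V : {vspace S1 R}) :
  \dim V = 1%N /\ is_subalgebra V <->
  [\/ V = <[s1e1]>%VS, V = <[s1e2]>%VS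
    | exists alpha, V = <[alpha *: s1e2 + s1e3]>%VS].
Proof.
split=> [/subalgebra_dim1P[v v_nz [-> /s1mul_self_vline]] | ].
  exact: vline_s1_normal_form.
by move=> /s1_normal_form_subalgebra/subalgebra_dim1P.
Qed.

End S1Lines.

Section S1Automorphisms.
Context {R : realType}.
Implicit Types (x y v w : S1 R) (a k : R[i]).

Lemma s1_automorphismZ f k x : is_s1_automorphism f -> f (k *: x) = k *: f x.
Proof.
case=> f_lin _ _; have f0 : f 0 = 0.
  apply: (addrI (f 0)); rewrite addr0 [in RHS](_ : 0 = 1 *: 0 + 0).
  - by rewrite f_lin scale1r.
  - by rewrite scale1r addr0.
by rewrite -[k *: x]addr0 f_lin f0 addr0.
Qed.

Lemma maps_onto_vline {f v w} :
  is_s1_automorphism f -> f v = w -> maps_onto f <[v]>%VS <[w]>%VS.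
Proof.
move=> f_aut fv y; split=> [/vlineP[k ->] | [_ /vlineP[k ->] <-]].
  by exists (k *: v); [rewrite memvZ ?memv_line | rewrite s1_automorphismZ ?fv].
by apply/vlineP; exists k; rewrite s1_automorphismZ ?fv.
Qed.

Lemma id_s1_automorphism : is_s1_automorphism (@id (S1 R)).
Proof. by split => //; exists id. Qed.

(* e1 |-> e1, e2 |-> e3, e3 |-> e2 - a e3: any linear bijection fixing e1
   and preserving <e2, e3> is an automorphism, as <e2, e3> squares to 0. *)
Definition s1_aut a x : S1 R :=
  \row_j (if j == i0 then x 0 i0
          else if j == i1 then x 0 i2 else x 0 i1 - a * x 0 i2).

Definition s1_aut_inv a x : S1 R :=
  \row_j (if j == i0 then x 0 i0
          else if j == i1 then x 0 i2 + a * x 0 i1 else x 0 i1).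

Lemma s1_aut_automorphism a : is_s1_automorphism (s1_aut a).
Proof.
split=> [k x y | | x y]; try by apply: row3P; rewrite !mxE /=; ring.
by exists (s1_aut_inv a) => x; apply: row3P; rewrite !mxE /=; ring.
Qed.

Lemma s1_aut_line a : s1_aut a (a *: s1e2 + s1e3) = s1e2.
Proof. by apply: row3P; rewrite !mxE /=; ring. Qed.

End S1Automorphisms.

Theorem mainTheorem14 (R : realType) :
  (forall V : {vspace S1 R},
     (\dim V = 1%N /\ is_subalgebra V) <->
     [\/ V = <[s1e1]>%VS, V = <[s1e2]>%VS
       | exists alpha : R[i], V = <[alpha *: s1e2 + s1e3]>%VS]) /\
  (forall V : {vspace S1 R}, \dim V = 1%N -> is_subalgebra V ->
     exists f : S1 R -> S1 R, is_s1_automorphism f /\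
       (maps_onto f V <[s1e1]>%VS \/ maps_onto f V <[s1e2]>%VS)).
Proof.
split=> [|V dimV subV]; first exact: subalgebra_dim1_normal_form.
have [-> | -> | [a ->]] := proj1 (subalgebra_dim1_normal_form V) (conj dimV subV).
- exists id; split; [exact: id_s1_automorphism | left].
  exact: maps_onto_vline id_s1_automorphism _.
- exists id; split; [exact: id_s1_automorphism | right].
  exact: maps_onto_vline id_s1_automorphism _.
- exists (s1_aut a); split; [exact: s1_aut_automorphism | right].
  exact: maps_onto_vline (s1_aut_automorphism a) (s1_aut_line a).
Qed.
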